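(* Let $q=p^f$ with $p$ prime, $n=q+1$, and let $\mathbf{A}\in\mathrm{GL}_n(q)$ be the matrix defined in the context. Let $\mathcal{C}$ be an $\langle\mathbf{A}\rangle$-irreducible linear $[n,k]_q$ code. Then either $k=2$, or $k=1$, $q$ is even and $\mathcal{C}$ is spanned by the vector $(1,1,\ldots,1)$. If further $\mathcal{C}$ is faithful, then $\langle\mathbf{A}\rangle$ acts regularly on the set of nonzero codewords of $\mathcal{C}$; in particular, $\mathcal{C}$ is an equidistant linear $[n,2]_q$ code of weight $q$.
   Context: A linear $[n,k]_q$ code is a $k$-dimensional subspace of the row space $\mathbb{F}_q^n$; the weight of a vector is its number of nonzero coordinates; a code is equidistant of weight $\omega$ if all nonzero codewords have weight $\omega$. Write the multiplicative group $\mathbb{F}_q^*=\langle\eta,\lambda\rangle$ where $\lambda$ has odd order and $\eta$ has order a power of $2$. Let $\mathbf{D}$ be the $n\times n$ diagonal matrix $\mathrm{diag}(\eta\lambda,\lambda,\eta\lambda,\ldots,\eta\lambda)$ (first entry $\eta\lambda$, second entry $\lambda$, remaining $n-2$ entries $\eta\lambda$), let $\mathbf{P}=\begin{pmatrix}\mathbf{0}' & \mathbf{I}_{n-1}\\ 1 & \mathbf{0}\end{pmatrix}$ (where $\mathbf{0}'$ is the zero column of length $n-1$ and $\mathbf{0}$ the zero row of length $n-1$), and $\mathbf{A}=\mathbf{D}\mathbf{P}$, acting on $\mathbb{F}_q^n$ by right multiplication of row vectors. A code $\mathcal{C}$ is $\langle\mathbf{A}\rangle$-invariant if $\mathbf{u}\mathbf{A}\in\mathcal{C}$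 for all $\mathbf{u}\in\mathcal{C}$; an $\langle\mathbf{A}\rangle$-invariant $[n,k]_q$ code is $\langle\mathbf{A}\rangle$-irreducible if it contains no $\langle\mathbf{A}\rangle$-invariant $[n,k']_q$ code with $1\leqslant k'<k$, and faithful if no nonidentity element of $\langle\mathbf{A}\rangle$ fixes $\mathcal{C}$ pointwise. *)

From HB Require Import structures.
From mathcomp Require Import all_boot all_order all_algebra.
Set Implicit Arguments. Unset Strict Implicit. Unset Printing Implicit Defensive.
Import GRing.Theory.
Local Open Scope ring_scope.

(* Linear codes of length n over F are represented (as in mxalgebra) by the
   row space of a matrix C : 'M[F]_n; its dimension k is \rank C. *)

Section Defs.
Variable F : fieldType.
Variable n : nat.

Definition Dmat (eta lam : F) : 'M[F]_n :=
  diag_mx (\row_(i < n) (if (i : nat) == 1%N then lam else eta * lam)).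

(* P = [[0', I_(n-1)], [1, 0]] : P i j = 1 iff j = i+1 (mod n) *)
Definition Pmat : 'M[F]_n :=
  \matrix_(i < n, j < n) (((j : nat) == (i.+1 %% n)%N)%:R : F).

Definition Amat (eta lam : F) : 'M[F]_n := Dmat eta lam *m Pmat.

Definition invariant (A C : 'M[F]_n) : Prop := (C *m A <= C)%MS.

Definition irreducible_code (A C : 'M[F]_n) : Prop :=
  invariant A C /\
  forall C' : 'M[F]_n, (C' <= C)%MS -> invariant A C' ->
    ~ (0 < \rank C' < \rank C)%N.

Definition faithful_code (A C : 'M[F]_n) : Prop :=
  forall m : nat,
    (forall u : 'rV[F]_n, (u <= C)%MS -> u *m A ^+ m = u) -> A ^+ m = 1%:M.

Definition acts_regularly (A C : 'M[F]_n) : Prop :=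
  (forall u v : 'rV[F]_n, (u <= C)%MS -> u != 0 -> (v <= C)%MS -> v != 0 ->
     exists m : nat, u *m A ^+ m = v) /\
  (forall (u : 'rV[F]_n) (m : nat), (u <= C)%MS -> u != 0 ->
     u *m A ^+ m = u -> A ^+ m = 1%:M).

Definition wt (u : 'rV[F]_n) : nat := #|[set j : 'I_n | u 0 j != 0]|.

Definition equidistant (C : 'M[F]_n) (w : nat) : Prop :=
  forall u : 'rV[F]_n, (u <= C)%MS -> u != 0 -> wt u = w.

End Defs.

Arguments Dmat {F n}.
Arguments Pmat {F n}.
Arguments Amat {F n}.

From HB Require Import structures.
From mathcomp Require Import all_boot all_order all_algebra all_field.
From mathcomp Require Import mxabelem zify.
Set Implicit Arguments. Unset Strict Implicit. Unset Printing Implicit Defensive.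
Import GRing.Theory.
Local Open Scope ring_scope.

(** A is monomial with A^(q+1) = c I, where c = lam (eta lam)^q generates
   F^* (because eta and lam do); hence A has order q^2 - 1 and A^(q^2) = A.
   So B = A^q + A satisfies B^q = B by Frobenius, i.e. prod_(x in F) (B - x) = 0,
   and on the irreducible code C some factor B - x vanishes; multiplying by A,
   C is killed by A^2 - x A + c, so C = <u, uA> for every nonzero u in C.
   A one-dimensional C is an eigenline u A = b u with b^(q+1) = c; as c has
   order q - 1 this forces q even, hence eta = 1, b = lam and u constant.
   If C is faithful, every nonzero codeword has trivial stabiliser in <A>, so
   its orbit consists of all q^2 - 1 nonzero codewords; A being monomial they
   all have the same weight w, and counting the nonzero coordinates of the
   codewords of a 2-dimensional code with no zero coordinate gives
   w (q^2 - 1) = (q + 1)(q^2 - q), i.e. w = q. *)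

Lemma coprime_exprs_eq1 (R : nzRingType) (x : R) a b :
  (0 < a)%N -> coprime a b -> x ^+ a = 1 -> x ^+ b = 1 -> x = 1.
Proof.
move=> a_gt0 coab xa xb; have [d prim_x d_a] := prim_order_exists a_gt0 xa.
have d_b : (d %| b)%N by rewrite (prim_order_dvd prim_x) xb.
have d1 : d = 1%N by apply/eqP; rewrite -dvdn1 -(eqP coab) dvdn_gcd d_a.
by move: (prim_expr_order prim_x); rewrite d1 expr1.
Qed.

Lemma prim_root_exp_coprime_powers (F : fieldType) (x : F) d k :
  d.-primitive_root x -> coprime k d -> exists e, x = (x ^+ k) ^+ e.
Proof.
move=> prim_x cokd; rewrite -(prim_root_exp_coprime k prim_x) in cokd.
by have [e xe] := prim_rootP cokd (prim_expr_order prim_x); exists e.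
Qed.

Lemma eq_of_dvdn_add_sub N i j :
  (i < N)%N -> (j < N)%N -> (N %| j + (N - i))%N -> i = j.
Proof. by move=> ltiN ltjN /dvdnP[[|[|t]]]; rewrite ?mul0n ?mul1n ?mulSn; lia. Qed.

Section FiniteFieldUnits.
Variable F : finFieldType.
Local Notation q := #|F|.

Lemma card_pred_gt0 : (0 < q.-1)%N.
Proof. by have := finNzRing_gt1 F; case: (q) => [|[]]. Qed.

Lemma odd_card_pred : odd q.-1 = ~~ odd q.
Proof. by have := finNzRing_gt1 F; case: (q) => // k _; rewrite /= negbK. Qed.

Lemma sqrn_card_pred : (q ^ 2).-1 = (q.+1 * q.-1)%N.
Proof. by case: (q) => [|k] //; rewrite expnS expn1 /=; nia. Qed.

Lemma expf_card_pred (x : F) : x != 0 -> x ^+ q.-1 = 1.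
Proof.
move=> x0; apply: (mulfI x0); rewrite mulr1 -exprS prednK ?expf_card //.
by rewrite ltnW ?finNzRing_gt1.
Qed.

Lemma finField_generator_prim_root (z : F) :
  z != 0 -> (forall x : F, x != 0 -> exists e, x = z ^+ e) ->
  (q.-1).-primitive_root z.
Proof.
move=> z0 zgen.
have [d prim_z d_q] := prim_order_exists card_pred_gt0 (expf_card_pred z0).
suff q_d : (q.-1 <= d)%N.
  by have <- : d = q.-1 by apply/eqP; rewrite eqn_leq dvdn_leq ?card_pred_gt0.
have roots : all d.-unity_root (enum [pred x : F | x != 0]).
  apply/allP => x; rewrite mem_enum => /zgen[e ->].
  by rewrite unity_rootE -exprM mulnC exprM (prim_expr_order prim_z) expr1n.
have := max_unity_roots (prim_order_gt0 prim_z) roots (enum_uniq _).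
by rewrite -cardE cardC1.
Qed.

End FiniteFieldUnits.

Lemma mulmx_exprD (R : pzRingType) m n (u : 'M[R]_(m, n.+1)) (A : 'M_n.+1) i k :
  u *m A ^+ (i + k) = u *m A ^+ i *m A ^+ k.
Proof. by rewrite exprD mulmxA. Qed.

Lemma stablemxX (K : fieldType) m (C A : 'M[K]_m.+1) k :
  stablemx C A -> stablemx C (A ^+ k).
Proof.
move=> stC; elim: k => [|k IHk]; first by rewrite expr0 mulmx1.
by rewrite exprSr mulmxA (submx_trans (submxMr _ IHk)).
Qed.

Lemma row_eigen_pow (K : fieldType) m (A : 'M[K]_m) (u : 'rV[K]_m) b k :
  u *m A = b *: u -> u *m A ^+ k = b ^+ k *: u.
Proof.
move=> uA; elim: k => [|k IHk]; first by rewrite expr0 mulmx1 scale1r.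
by rewrite exprSr mulmxA IHk -scalemxAl uA scalerA -exprSr.
Qed.

Lemma rank1_eqmx_rV (K : fieldType) m (C : 'M[K]_m) (u : 'rV[K]_m) :
  \rank C = 1%N -> (u <= C)%MS -> u != 0 -> (C :=: u)%MS.
Proof.
move=> rC1 uC u0; apply/eqmxP; rewrite -(geq_leqif (mxrank_leqif_sup uC)) rC1.
by rewrite rank_rV u0 uC.
Qed.

Lemma rank1_invariant_eigen (K : fieldType) m (A C : 'M[K]_m) (u : 'rV[K]_m) :
  invariant A C -> \rank C = 1%N -> (u <= C)%MS -> u != 0 ->
  exists b, u *m A = b *: u.
Proof.
move=> stC rC1 uC u0; apply/sub_rVP.
by rewrite -(rank1_eqmx_rV rC1 uC u0) (submx_trans (submxMr _ uC) stC).
Qed.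

Section IrreducibleCodes.
Variables (K : fieldType) (m : nat) (A C : 'M[K]_m.+1).
Hypothesis irrC : irreducible_code A C.

Lemma irreducible_code_minimal (W : 'M[K]_m.+1) :
  (W <= C)%MS -> invariant A W -> W != 0 -> (C <= W)%MS.
Proof.
case: irrC => _ irr WC stW W0.
rewrite -(geq_leqif (mxrank_leqif_sup WC)) leqNgt; apply/negP => ltWC.
by apply: (irr W WC stW); rewrite lt0n mxrank_eq0 W0.
Qed.

Lemma irreducible_code_kermx (M : 'M[K]_m.+1) (u : 'rV[K]_m.+1) :
  comm_mx M A -> (u <= C)%MS -> u != 0 -> u *m M = 0 -> (C <= kermx M)%MS.
Proof.
move=> MA uC u0 uM; set W := (C :&: kermx M)%MS.
have WC : (W <= C)%MS by apply: capmxSl.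
have stW : invariant A W.
  rewrite /invariant sub_capmx (submx_trans (submxMr _ WC)) ?(proj1 irrC) //=.
  by apply/sub_kermxP; rewrite -mulmxA -MA mulmxA (sub_kermxP (capmxSr _ _)) mul0mx.
have W0 : W != 0.
  by apply: contraNneq u0 => W0; rewrite -submx0 -W0 sub_capmx uC; apply/sub_kermxP.
exact: submx_trans (irreducible_code_minimal WC stW W0) (capmxSr _ _).
Qed.

Lemma irreducible_code_horner_prod (I : Type) (r : seq I) (P : I -> {poly K})
    (u : 'rV[K]_m.+1) :
  (u <= C)%MS -> u != 0 -> u *m horner_mx A (\prod_(i <- r) P i) = 0 ->
  exists i, (C <= kermx (horner_mx A (P i)))%MS.
Proof.
elim: r u => [|i r IHr] u uC u0.
  by rewrite big_nil rmorph1 mulmx1 => /eqP; rewrite (negPf u0).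
rewrite big_cons rmorphM -mulmxE mulmxA.
have [uPi0 _|uPi0] := eqVneq (u *m horner_mx A (P i)) 0.
  by exists i; apply: irreducible_code_kermx uC u0 uPi0; apply: comm_horner_mx.
apply: IHr uPi0; apply: submx_trans (submxMr _ uC) _.
exact: horner_mx_stable (proj1 irrC).
Qed.

Lemma irreducible_code_fixed (u : 'rV[K]_m.+1) k :
  faithful_code A C -> (u <= C)%MS -> u != 0 -> u *m A ^+ k = u -> A ^+ k = 1%:M.
Proof.
move=> faithC uC u0 uk; apply: faithC => v vC.
have comm : comm_mx (A ^+ k - 1%:M) A.
  by rewrite /comm_mx mulmxBl mulmxBr mul1mx mulmx1 !mulmxE -exprSr -exprS.
have := irreducible_code_kermx comm uC u0.
rewrite mulmxBr mulmx1 uk subrr => /(_ erefl) /(submx_trans vC) /sub_kermxP.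
by rewrite mulmxBr mulmx1 => /eqP; rewrite subr_eq0 => /eqP.
Qed.

Lemma irreducible_code_quadratic x y (u : 'rV[K]_m.+1) :
  (C <= kermx (A ^+ 2 - x *: A + y%:M))%MS -> (u <= C)%MS -> u != 0 ->
  (C :=: u + u *m A)%MS.
Proof.
move=> CQ uC u0; have stC := proj1 irrC.
have uAC : (u *m A <= C)%MS by apply: submx_trans (submxMr _ uC) stC.
have spanC : ((u + u *m A)%MS <= C)%MS by rewrite addsmx_sub uC.
apply/eqmxP; rewrite spanC andbT; apply: irreducible_code_minimal spanC _ _.
  have /sub_kermxP/eqP := submx_trans uC CQ.
  rewrite mulmxDr mulmxBr -scalemxAr mul_mx_scalar addr_eq0 subr_eq => /eqP uA2.
  rewrite /invariant addsmxMr addsmx_sub addsmxSr /= -mulmxA mulmxE -expr2 uA2.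
  by rewrite -scaleNr addmx_sub ?scalemx_sub ?addsmxSl ?addsmxSr.
by apply: contraNneq u0 => span0; rewrite -submx0 -span0 addsmxSl.
Qed.

End IrreducibleCodes.

Section FrobeniusMx.
Variables (F : finFieldType) (m : nat).
Local Notation q := #|F|.

Lemma prod_sub_scalar_mx_eq0 (N : 'M[F]_m.+1) :
  N ^+ q = N -> \prod_(x : F) (N - x%:M) = 0.
Proof.
move=> Nq; have := congr1 (horner_mx N) (finField_genPoly F).
rewrite rmorphB rmorphXn /= horner_mx_X Nq subrr rmorph_prod => /esym <-.
by apply: eq_bigr => x _; rewrite rmorphB /= horner_mx_X horner_mx_C.
Qed.

Lemma frobenius_fixed_trace_mx (p : nat) (M : 'M[F]_m.+1) :
  p \in [pchar F] -> p.-nat q -> M ^+ (q * q) = M -> (M ^+ q + M) ^+ q = M ^+ q + M.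
Proof.
move=> pF q_p Mqq.
have pnat_q : [pchar {poly F}].-nat q.
  by rewrite (eq_pnat _ (pchar_lalg _)); apply: sub_in_pnat q_p => r _ /eqnP ->.
have hX : horner_mx M ('X^q + 'X) = M ^+ q + M by rewrite rmorphD rmorphXn /= horner_mx_X.
rewrite -hX -rmorphXn exprDn_pchar // -exprM rmorphD !rmorphXn /= horner_mx_X Mqq.
by rewrite addrC.
Qed.

End FrobeniusMx.

Lemma card_rowgD0 (F : finFieldType) m n (C : 'M[F]_(m, n)) :
  #|rowg C :\ 0| = (#|F| ^ \rank C).-1.
Proof. by rewrite -card_rowg (cardsD1 0 (rowg C)) inE sub0mx. Qed.

Section WeightEnumerator.
Variables (F : finFieldType) (n : nat) (C : 'M[F]_n).
Local Notation q := #|F|.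

Lemma wt0 : wt (0 : 'rV[F]_n) = 0%N.
Proof. by apply/eqP; rewrite cards_eq0; apply/eqP/setP => j; rewrite !inE mxE eqxx. Qed.

Hypothesis coordC : forall j : 'I_n, exists2 v : 'rV[F]_n, (v <= C)%MS & v 0 j != 0.

Lemma card_rowg_coord_neq0 (j : 'I_n) :
  #|[set v in rowg C | v 0 j != 0]| = (q ^ \rank C - q ^ (\rank C).-1)%N.
Proof.
pose e : 'cV[F]_n := delta_mx j 0.
have mul_e (w : 'rV[F]_n) : w *m e = (w 0 j)%:M by rewrite -colE [LHS]mx11_scalar mxE.
have rank_Ce : \rank (C *m e) = 1%N.
  apply/eqP; rewrite eqn_leq rank_leq_col lt0n mxrank_eq0.
  have [v /submxP[w ->] vj] := coordC j; apply: contra vj => /eqP Ce0.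
  by have := mul_e (w *m C); rewrite -mulmxA Ce0 mulmx0 => /esym/eqP; rewrite fmorph_eq0.
have := mxrank_mul_ker C e; rewrite rank_Ce add1n => rank_CK.
have -> : [set v in rowg C | v 0 j != 0] = rowg C :\: rowg (C :&: kermx e)%MS.
  apply/setP => w; rewrite !inE sub_capmx sub_kermx mul_e fmorph_eq0.
  by case: (w <= C)%MS; rewrite /= ?andbT.
by rewrite cardsDS ?rowgS ?capmxSl // !card_rowg -rank_CK.
Qed.

Lemma sum_wt_rowg :
  (\sum_(v in rowg C) wt v = n * (q ^ \rank C - q ^ (\rank C).-1))%N.
Proof.
under eq_bigr => v _ do rewrite /wt -sum1dep_card.
rewrite (exchange_big_dep predT) //=.
under eq_bigr => j _ do rewrite sum1dep_card card_rowg_coord_neq0.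
by rewrite sum_nat_const card_ord.
Qed.

End WeightEnumerator.

Section AmatCodes.
Variables (F : finFieldType) (eta lam : F).
Hypotheses (eta_neq0 : eta != 0) (lam_neq0 : lam != 0).
Local Notation q := #|F|.
Local Notation n := q.+1.
Local Notation A := (Amat eta lam : 'M[F]_n).

Definition Adiag (k : nat) : F := if k == 1%N then lam else eta * lam.

Definition Acoef (i s : nat) : F := \prod_(t < s) Adiag ((i + t) %% n).

Definition Ascalar : F := lam * (eta * lam) ^+ q.

Definition shift (j : 'I_n) (s : nat) : 'I_n := inord ((j + s) %% n).

Lemma Adiag_neq0 k : Adiag k != 0.
Proof. by rewrite /Adiag; case: ifP; rewrite ?mulf_neq0. Qed.

Lemma Acoef_neq0 i s : Acoef i s != 0.
Proof. by apply/prodf_neq0 => t _; apply: Adiag_neq0. Qed.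

Lemma Ascalar_neq0 : Ascalar != 0.
Proof. by rewrite mulf_neq0 ?expf_neq0 ?mulf_neq0. Qed.

Lemma val_shift j s : shift j s = ((j + s) %% n)%N :> nat.
Proof. by rewrite inordK ?ltn_mod. Qed.

Lemma shift_inj s : injective (shift^~ s).
Proof.
move=> i j /(congr1 (@nat_of_ord _)) /eqP; rewrite !val_shift eqn_modDr !modn_small //.
by move/eqP/val_inj.
Qed.

Lemma shift0 j : shift j 0 = j.
Proof. by apply: val_inj; rewrite /= val_shift addn0 modn_small. Qed.

Lemma shift_shift j s t : shift (shift j s) t = shift j (s + t)%N.
Proof. by apply: val_inj; rewrite /= !val_shift modnDml addnA. Qed.

Lemma shift_onto (i j : 'I_n) : shift i (n - i + j)%N = j.
Proof. by apply: val_inj; rewrite /= val_shift addnA subnKC 1?ltnW // modnDl modn_small. Qed.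

Lemma Amat_entry i j : A i j = ((j : nat) == (i.+1 %% n)%N)%:R * Adiag i.
Proof. by rewrite /Amat /Dmat mul_diag_mx !mxE mulrC. Qed.

Lemma Apow_entry s i j :
  (A ^+ s) i j = ((j : nat) == ((i + s) %% n)%N)%:R * Acoef i s.
Proof.
rewrite /Acoef; elim: s j => [|s IHs] j.
  by rewrite expr0 big_ord0 mulr1 addn0 modn_small // !mxE eq_sym.
rewrite exprSr -mulmxE !mxE (bigD1 (shift i s)) //= big1 ?addr0 => [|k kis].
  rewrite IHs val_shift eqxx mul1r Amat_entry big_ord_recr /= val_shift.
  have -> : (((i + s) %% n).+1 %% n = (i + s.+1) %% n)%N.
    by rewrite -[_.+1]addn1 modnDml addn1 addnS.
  by rewrite mulrCA mulrA.
rewrite IHs; case: eqP => [kE|]; last by rewrite !mul0r.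
by move: kis; rewrite -val_eqE /= val_shift kE eqxx.
Qed.

Lemma row_Apow_shift (y : 'rV[F]_n) s j :
  (y *m A ^+ s) 0 (shift j s) = y 0 j * Acoef j s.
Proof.
rewrite !mxE (bigD1 j) //= big1 ?addr0 => [|k kj].
  by rewrite Apow_entry val_shift eqxx mul1r.
rewrite Apow_entry val_shift eqn_modDr !modn_small //.
by case: eqP => [/val_inj jk|]; [rewrite jk eqxx in kj | rewrite mul0r mulr0].
Qed.

Lemma prod_Adiag : \prod_(t < n) Adiag t = Ascalar.
Proof.
have one_lt_n : (1 < n)%N by rewrite ltnS ltnW ?finNzRing_gt1.
rewrite (bigD1 (Ordinal one_lt_n)) //= /Adiag eqxx; congr (_ * _).
rewrite (eq_bigr (fun _ => eta * lam)) => [|t /negPf]; last by rewrite -val_eqE /= => ->.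
by rewrite prodr_const cardC1 card_ord.
Qed.

Lemma Apow_n : A ^+ n = Ascalar%:M.
Proof.
apply/matrixP => i j; rewrite Apow_entry !mxE modnDr modn_small // eq_sym mulr_natl.
congr (_ *+ _); rewrite -prod_Adiag (reindex_inj (shift_inj (s:=i))) /=.
by apply: eq_bigr => t _; rewrite val_shift addnC.
Qed.

Lemma Amat_unit : A \in unitmx.
Proof.
have : A *m (Ascalar^-1 *: A ^+ q) = 1%:M.
  by rewrite -scalemxAr mulmxE -exprS Apow_n scale_scalar_mx mulVf ?Ascalar_neq0.
by move/mulmx1_unit => [].
Qed.

Lemma row_Apow_eq0 (v : 'rV[F]_n) k : (v *m A ^+ k == 0) = (v == 0).
Proof. by rewrite mulmx_free_eq0 // row_free_unit unitrX // Amat_unit. Qed.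

Lemma wt_mulA (v : 'rV[F]_n) : wt (v *m A) = wt v.
Proof.
have vA i : (v *m A) 0 (shift i 1) = v 0 i * Acoef i 1 by rewrite -row_Apow_shift.
rewrite /wt -[RHS](card_imset _ (shift_inj (s:=1))); apply: eq_card => j.
rewrite inE; apply/idP/imsetP => [|[i]]; last first.
  by rewrite inE => vi0 ->; rewrite vA mulf_neq0 ?Acoef_neq0.
have -> : j = shift (shift j q) 1.
  by apply: val_inj; rewrite /= shift_shift val_shift addn1 modnDr modn_small.
by rewrite vA mulf_eq0 negb_or => /andP[vj0 _]; exists (shift j q); rewrite ?inE.
Qed.

Lemma wt_row_Apow (v : 'rV[F]_n) k : wt (v *m A ^+ k) = wt v.
Proof.
elim: k => [|k IHk]; first by rewrite expr0 mulmx1.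
by rewrite -[k.+1]addn1 mulmx_exprD expr1 wt_mulA.
Qed.

Lemma Ascalar_expE : Ascalar = eta ^+ q * lam ^+ n.
Proof. by rewrite /Ascalar exprMn exprS mulrCA. Qed.

Section Generators.
Variables (a m0 : nat).
Hypotheses (eta_2a : eta ^+ (2 ^ a) = 1) (m0_odd : odd m0) (lam_m0 : lam ^+ m0 = 1).
Hypothesis eta_lam_gen :
  forall x : F, x != 0 -> exists i j : nat, x = eta ^+ i * lam ^+ j.

Lemma eta_eq1 : ~~ odd q -> eta = 1.
Proof.
move=> q_even.
apply: (coprime_exprs_eq1 (expn_gt0 2 a) _ eta_2a (expf_card_pred eta_neq0)).
by apply: coprimeXl; rewrite coprime2n odd_card_pred.
Qed.

Lemma lam_Ascalar_pow : exists e, lam = Ascalar ^+ e.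
Proof.
have [M prim_lam M_m0] := prim_order_exists (odd_gt0 m0_odd) lam_m0.
have M_q : (M %| q.-1)%N by rewrite (prim_order_dvd prim_lam) expf_card_pred.
have M_odd : odd M := dvdn_odd M_m0 m0_odd.
have cop : coprime (n * 2 ^ a) M.
  rewrite coprimeMl coprimeXl ?coprime2n // andbT coprime_sym.
  have [r qE] := dvdnP M_q; have -> : n = (r * M + 2)%N.
    by rewrite -qE addn2 prednK // ltnW ?finNzRing_gt1.
  by rewrite /coprime gcdnMDl -/(coprime M 2) coprimen2.
have [e lamE] := prim_root_exp_coprime_powers prim_lam cop.
exists (2 ^ a * e)%N; rewrite exprM Ascalar_expE exprMn -!exprM [(q * _)%N]mulnC.
by rewrite exprM eta_2a expr1n mul1r.
Qed.

Lemma eta_Ascalar_pow : exists e, eta = Ascalar ^+ e.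
Proof.
have [q_odd|q_even] := boolP (odd q); last by exists 0%N; rewrite eta_eq1.
have [d prim_eta d_2a] := prim_order_exists (expn_gt0 2 a) eta_2a.
have cop : coprime (q * m0) d.
  by apply: coprime_dvdr d_2a _; rewrite coprimeXr // coprimen2 oddM q_odd.
have [e etaE] := prim_root_exp_coprime_powers prim_eta cop.
exists (m0 * e)%N; rewrite exprM Ascalar_expE exprMn -!exprM [(n * m0)%N]mulnC.
by rewrite [lam ^+ (m0 * n)]exprM lam_m0 expr1n mulr1.
Qed.

Lemma Ascalar_prim_root : (q.-1).-primitive_root Ascalar.
Proof.
apply: finField_generator_prim_root Ascalar_neq0 _ => x /eta_lam_gen[i [j ->]].
have [[e1 etaE] [e2 lamE]] := (eta_Ascalar_pow, lam_Ascalar_pow).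
by exists (e1 * i + e2 * j)%N; rewrite exprD !exprM -etaE -lamE.
Qed.

End Generators.

Hypothesis Ascalar_prim : (q.-1).-primitive_root Ascalar.

Lemma Apow_eq1 k : A ^+ k = 1%:M -> (n * q.-1 %| k)%N.
Proof.
move=> Ak; have n_k : (n %| k)%N.
  have := congr1 (fun M : 'M_n => M 0 (shift 0 k)) Ak.
  rewrite Apow_entry !mxE val_shift eqxx mul1r.
  case: eqP => [/(congr1 val)|_ /eqP]; last by rewrite (negPf (Acoef_neq0 _ _)).
  by rewrite /= val_shift add0n => /esym/eqP.
have [t kE] := dvdnP n_k; move: Ak; rewrite kE mulnC exprM Apow_n -rmorphXn /=.
move/(congr1 (fun M : 'M_n => M 0 0)); rewrite !mxE eqxx !mulr1n => /eqP.
by rewrite -(prim_order_dvd Ascalar_prim) dvdn_pmul2l.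
Qed.

Lemma Apow_order : A ^+ (n * q.-1) = 1%:M.
Proof. by rewrite exprM Apow_n -rmorphXn /= (prim_expr_order Ascalar_prim). Qed.

Lemma Apow_sqr_card : A ^+ (q * q) = A.
Proof.
have -> : (q * q = n * q.-1 + 1)%N.
  by have := card_pred_gt0 F; case: (q) => // k _; rewrite /= mulSn mulnS; lia.
by rewrite exprD Apow_order mul1r.
Qed.

Variables (p f : nat).
Hypotheses (p_prime : prime p) (cardF : #|F| = (p ^ f)%N).
Variable C : 'M[F]_n.
Hypotheses (C_neq0 : (0 < \rank C)%N) (irrC : irreducible_code A C).

Lemma nonzero_codeword : exists2 u : 'rV[F]_n, (u <= C)%MS & u != 0.
Proof. by apply/rowV0Pn; rewrite -mxrank_eq0 -lt0n. Qed.

Lemma code_sub_kermx_quadratic :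
  exists x, (C <= kermx (A ^+ 2 - x *: A + Ascalar%:M))%MS.
Proof.
have [u uC u0] := nonzero_codeword.
have q_p : p.-nat q by rewrite cardF pnatX pnat_id.
set B := A ^+ q + A.
have Bq : B ^+ q = B.
  exact: frobenius_fixed_trace_mx (card_finPcharP cardF p_prime) q_p Apow_sqr_card.
have hornerB x : horner_mx A ('X^q + 'X - x%:P) = B - x%:M.
  by rewrite rmorphB rmorphD rmorphXn /= horner_mx_X horner_mx_C.
have [|x CK] := irreducible_code_horner_prod irrC
    (r := index_enum F) (P := fun x => 'X^q + 'X - x%:P) uC u0.
  rewrite rmorph_prod (eq_bigr (fun x => B - x%:M)) => [|x _]; last exact: hornerB.
  by rewrite prod_sub_scalar_mx_eq0 ?mulmx0.
exists x; apply: submx_trans CK _; apply/sub_kermxP.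
have -> : A ^+ 2 - x *: A + Ascalar%:M = (B - x%:M) *m A.
  rewrite mulmxBl mulmxDl mul_scalar_mx !mulmxE -exprSr -expr2 Apow_n.
  by rewrite addrC addrA.
by rewrite hornerB mulmxA (sub_kermxP (submx_refl _)) mul0mx.
Qed.

Lemma code_eq_span (u : 'rV[F]_n) : (u <= C)%MS -> u != 0 -> (C :=: u + u *m A)%MS.
Proof. by have [x CK] := code_sub_kermx_quadratic; apply: irreducible_code_quadratic CK. Qed.

Lemma rank_code_le2 : (\rank C <= 2)%N.
Proof.
have [u uC u0] := nonzero_codeword; rewrite (code_eq_span uC u0).
apply: leq_trans (mxrank_adds_leqif u (u *m A)).1 _.
by rewrite (@leq_add _ _ 1 1) ?rank_leq_row.
Qed.

Lemma code_coord_neq0 (j : 'I_n) : exists2 v : 'rV[F]_n, (v <= C)%MS & v 0 j != 0.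
Proof.
have [u uC u0] := nonzero_codeword.
have [i ui] : exists i, u 0 i != 0.
  apply/existsP; apply: contraR u0 => /existsPn u_eq0.
  by apply/eqP/rowP => i; rewrite mxE; apply/eqP/negbNE/u_eq0.
exists (u *m A ^+ (n - i + j)%N).
  exact: submx_trans (submxMr _ uC) (stablemxX _ (proj1 irrC)).
by rewrite -{2}(shift_onto i j) row_Apow_shift mulf_neq0 ?Acoef_neq0.
Qed.

Lemma rank1_code_eigen : \rank C = 1%N ->
  exists (u : 'rV[F]_n) b,
    [/\ (u <= C)%MS, u != 0, u *m A = b *: u, b != 0 & b ^+ n = Ascalar].
Proof.
move=> rC1; have [u uC u0] := nonzero_codeword.
have [b uA] := rank1_invariant_eigen (proj1 irrC) rC1 uC u0.
have bn : b ^+ n = Ascalar.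
  have := row_eigen_pow n uA; rewrite Apow_n mul_mx_scalar => /eqP.
  by rewrite -subr_eq0 -scalerBl scalemx_eq0 (negPf u0) orbF subr_eq0 eq_sym => /eqP.
exists u, b; split=> //.
by apply: contraNneq Ascalar_neq0 => b0; rewrite -bn b0 exprS mul0r.
Qed.

Lemma rank1_code_card_even : \rank C = 1%N -> ~~ odd q.
Proof.
move=> /rank1_code_eigen[u [b [_ _ _ b0 bn]]]; apply/negP => q_odd.
set k := q./2; have qE : q = k.*2.+1 by rewrite -[q in LHS]odd_double_half q_odd.
have nk : (n * k = q.-1 * k.+1)%N by rewrite qE -doubleS -doubleMl mulnC doubleMl.
have : Ascalar ^+ k = 1 by rewrite -bn -exprM nk exprM expf_card_pred // expr1n.
move/eqP; rewrite -(prim_order_dvd Ascalar_prim) qE /= => /dvdn_leq.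
have k_gt0 : (0 < k)%N by move: (finNzRing_gt1 F); rewrite qE; case: (k).
by move/(_ k_gt0); rewrite -addnn -{3}[k]add0n leq_add2r leqNgt k_gt0.
Qed.

Hypothesis eta1_of_even : ~~ odd q -> eta = 1.

Lemma rank1_code_const : \rank C = 1%N -> (C :=: (const_mx 1 : 'rV[F]_n))%MS.
Proof.
move=> rC1; have eta1 := eta1_of_even (rank1_code_card_even rC1).
have [u [b [uC u0 uA b0 bn]]] := rank1_code_eigen rC1.
have b_lam : b = lam.
  have expf_n (x : F) : x ^+ n = x ^+ 2 by rewrite exprS expf_card -expr2.
  have lam_n : b ^+ n = lam ^+ n by rewrite bn /Ascalar eta1 mul1r -exprS.
  have s0 : b / lam != 0 by rewrite mulf_neq0 ?invr_eq0.
  apply/divr1_eq/(coprime_exprs_eq1 (isT : 0 < 2)%N _ _ (expf_card_pred s0)).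
    by rewrite coprime2n odd_card_pred rank1_code_card_even.
  by rewrite exprMn exprVn -!expf_n lam_n mulfV ?expf_neq0.
have u_shift j : u 0 (shift j 1) = u 0 j.
  have := row_Apow_shift u 1 j; rewrite uA b_lam mxE /Acoef big_ord1 mulrC.
  by rewrite /Adiag eta1 mul1r if_same => /(mulIf lam_neq0).
have u_const j : u 0 j = u 0 0.
  have -> : j = shift 0 j by apply: val_inj; rewrite /= val_shift add0n modn_small.
  elim: (j : nat) => [|k IHk]; first by rewrite shift0.
  by rewrite -[k.+1]addn1 -shift_shift u_shift.
have uE : u = u 0 0 *: const_mx 1 by apply/rowP => j; rewrite !mxE u_const mulr1.
have u00 : u 0 0 != 0 by apply: contraNneq u0 => u00; rewrite uE u00 scale0r.
by apply: eqmx_trans (rank1_eqmx_rV rC1 uC u0) _; rewrite uE; apply: eqmx_scale.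
Qed.

Section Faithful.
Hypothesis faithC : faithful_code A C.

Lemma faithful_fixed (u : 'rV[F]_n) k :
  (u <= C)%MS -> u != 0 -> u *m A ^+ k = u -> (n * q.-1 %| k)%N.
Proof. by move=> uC u0 /(irreducible_code_fixed irrC faithC uC u0)/Apow_eq1. Qed.

Lemma faithful_rank2 : \rank C = 2%N.
Proof.
suff : \rank C != 1%N by move: C_neq0 rank_code_le2; case: (\rank C) => [|[|[|]]].
apply/eqP => /rank1_code_eigen[u [b [uC u0 uA b0 _]]].
have : u *m A ^+ q.-1 = u by rewrite (row_eigen_pow _ uA) expf_card_pred ?scale1r.
move/(faithful_fixed uC u0)/(dvdn_leq (card_pred_gt0 F)).
rewrite -{2}[q.-1]mul1n leq_pmul2r ?card_pred_gt0 // ltnS leqn0.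
by rewrite eqn0Ngt (ltnW (finNzRing_gt1 F)).
Qed.

Lemma faithful_orbit_inj (u : 'rV[F]_n) i j :
  (u <= C)%MS -> u != 0 -> (i < n * q.-1)%N -> (j < n * q.-1)%N ->
  u *m A ^+ i = u *m A ^+ j -> i = j.
Proof.
move=> uC u0 ltiN ltjN uij.
have : u *m A ^+ (j + (n * q.-1 - i)) = u.
  by rewrite mulmx_exprD -uij -mulmx_exprD (subnKC (ltnW ltiN)) Apow_order mulmx1.
by move/(faithful_fixed uC u0)/(eq_of_dvdn_add_sub ltiN ltjN).
Qed.

Lemma faithful_transitive (u v : 'rV[F]_n) :
  (u <= C)%MS -> u != 0 -> (v <= C)%MS -> v != 0 -> exists k, u *m A ^+ k = v.
Proof.
move=> uC u0 vC v0; pose orbit := [set u *m A ^+ k | k : 'I_(n * q.-1)].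
have orbit_sub : orbit \subset rowg C :\ 0.
  apply/subsetP => _ /imsetP[k _ ->]; rewrite !inE row_Apow_eq0 u0.
  exact: submx_trans (submxMr _ uC) (stablemxX _ (proj1 irrC)).
have : v \in orbit.
  suff -> : orbit = rowg C :\ 0 by rewrite !inE v0 vC.
  apply/eqP; rewrite eqEcard orbit_sub card_rowgD0 faithful_rank2 card_imset.
    by rewrite card_ord /=; apply: eq_leq; apply: sqrn_card_pred.
  by move=> i j /(faithful_orbit_inj uC u0 (ltn_ord i) (ltn_ord j)) /val_inj.
by case/imsetP => k _ ->; exists k.
Qed.

Lemma faithful_acts_regularly : acts_regularly A C.
Proof.
split; first exact: faithful_transitive.
move=> u k uC u0; exact: (irreducible_code_fixed irrC faithC uC u0).
Qed.

Lemma faithful_equidistant : equidistant C q.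
Proof.
have [u uC u0] := nonzero_codeword.
have wt_u v : (v <= C)%MS -> v != 0 -> wt v = wt u.
  by move=> vC v0; have [k <-] := faithful_transitive uC u0 vC v0; rewrite wt_row_Apow.
suff wt_uq : wt u = q by move=> v vC v0; rewrite wt_u.
have := sum_wt_rowg code_coord_neq0.
rewrite (big_setD1 0) ?inE ?sub0mx //= wt0 add0n.
rewrite (eq_bigr (fun _ => wt u)) => [|v]; last by rewrite !inE => /andP[v0 vC]; apply: wt_u.
rewrite sum_nat_const card_rowgD0 faithful_rank2 /= sqrn_card_pred.
have -> : (q ^ 2 - q ^ 1 = q.-1 * q)%N by rewrite -subn1 mulnBl mul1n expnS expn1.
by move/eqP; rewrite -mulnA eqn_pmul2l // eqn_pmul2l ?card_pred_gt0 // => /eqP.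
Qed.

End Faithful.

End AmatCodes.

Theorem lemma5p2 (F : finFieldType) (p f : nat) (eta lam : F)
  (C : 'M[F]_(#|F|.+1)) :
  prime p -> #|F| = (p ^ f)%N ->
  (* F^* = <eta, lam>, eta of 2-power order, lam of odd order *)
  eta != 0 -> lam != 0 ->
  (exists a : nat, eta ^+ (2 ^ a)%N = 1) ->
  (exists m : nat, odd m /\ lam ^+ m = 1) ->
  (forall x : F, x != 0 -> exists i j : nat, x = eta ^+ i * lam ^+ j) ->
  (0 < \rank C)%N ->
  irreducible_code (Amat eta lam) C ->
  (\rank C = 2%N \/
     [/\ \rank C = 1%N, ~~ odd #|F| & (C :=: (const_mx 1 : 'rV[F]_(#|F|.+1)))%MS])
  /\
  (faithful_code (Amat eta lam) C ->
     [/\ acts_regularly (Amat eta lam) C, \rank C = 2%N & equidistant C #|F|]).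
Proof.
move=> p_prime cardF eta0 lam0 [a eta_2a] [m0 [m0_odd lam_m0]] gen rC irrC.
have c_prim := Ascalar_prim_root eta0 lam0 eta_2a m0_odd lam_m0 gen.
have eta1 := eta_eq1 eta0 eta_2a.
split=> [|faithC].
  have [rC1|rC1] := eqVneq (\rank C) 1%N.
    right; split=> //; first exact: (rank1_code_card_even eta0 lam0 c_prim rC irrC rC1).
    exact: (rank1_code_const eta0 lam0 c_prim rC irrC eta1 rC1).
  have rC2 := rank_code_le2 eta0 lam0 c_prim p_prime cardF rC irrC.
  by left; move: rC rC1 rC2; case: (\rank C) => [|[|[|]]].
split.
- exact: (faithful_acts_regularly eta0 lam0 c_prim p_prime cardF rC irrC faithC).
- exact: (faithful_rank2 eta0 lam0 c_prim p_prime cardF rC irrC faithC).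
- exact: (faithful_equidistant eta0 lam0 c_prim p_prime cardF rC irrC faithC).
Qed.
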